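(* Let $A$ be a complex commutative completely regular semi-simple Banach algebra, $\widetilde{\sigma}:A\to A$ an algebra automorphism, and $\sigma:\Delta(A)\to\Delta(A)$ the homeomorphism (for the Gelfand topology) $\sigma(\mu)=\mu\circ\widetilde{\sigma}^{-1}$, with $\widehat{\sigma}(\widehat{a})=\widehat{a}\circ\sigma^{-1}$ the induced automorphism of $\widehat{A}$. Then the set of non-periodic points $\{\mu\in\Delta(A):\sigma^n(\mu)\neq\mu\text{ for all } n\neq 0\}$ is dense in $\Delta(A)$ if and only if $\widehat{A}$ is a maximal abelian subalgebra of $\widehat{A}\rtimes_{\widehat{\sigma}}\mathbb{Z}$. In particular, $A$ is maximal abelian in $A\rtimes_{\widetilde{\sigma}}\mathbb{Z}$ if and only if the non-periodic points of $(\Delta(A),\sigma)$ are dense in $\Delta(A)$.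
   Context: $\Delta(A)$ is the set of non-zero multiplicative linear functionals on $A$; the Gelfand transform of $a$ is $\widehat{a}(\mu)=\mu(a)$, $\widehat{A}$ is the set of Gelfand transforms, and the Gelfand topology is the weakest topology making all $\widehat{a}$ continuous. $A$ is semi-simple if the Gelfand transform is injective, and completely regular if for every Gelfand-closed $F\subseteq\Delta(A)$ and $\phi_0\in\Delta(A)\setminus F$ there is $a\in A$ with $\widehat{a}=0$ on $F$ and $\widehat{a}(\phi_0)\neq0$. For an algebra $B$ with automorphism $\Psi$, $B\rtimes_\Psi\mathbb{Z}$ is the set of finitely supported functions $\mathbb{Z}\to B$, written $\sum_n b_n\delta^n$, with pointwise linear operations and multiplication determined by $(b_n\delta^n)*(c_m\delta^m)=b_n\Psi^n(c_m)\delta^{n+m}$; $B$ is embedded as $\{b_0\delta^0\}$. *)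

From mathcomp Require Import all_boot all_algebra.
From mathcomp Require Import complex.
From mathcomp Require Import all_classical all_reals.
Import GRing.Theory Num.Theory.
Set Implicit Arguments. Unset Strict Implicit. Unset Printing Implicit Defensive.
Local Open Scope ring_scope.
Local Open Scope classical_set_scope.

Section Defs.
Variable R : realType.
Local Notation C := R[i].
(* The underlying complex vector space of the algebra; the (possibly
   non-unital) multiplication is [mul], the norm is [nrm]. *)
Variable A : lmodType C.
Variable mul : A -> A -> A.
Variable nrm : A -> R.

Definition comm_banach_algebra : Prop :=
  [/\ [/\ (forall a b c, mul a (mul b c) = mul (mul a b) c),
          (forall a b, mul a b = mul b a),
          (forall a b c, mul (a + b) c = mul a c + mul b c) &
          (forall (k : C) a b, mul (k *: a) b = k *: mul a b)],
      [/\ (forall a, nrm a = 0 -> a = 0),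
          (forall a b, nrm (a + b) <= nrm a + nrm b),
          (forall (k : C) a, real_complex R (nrm (k *: a)) = `|k| * real_complex R (nrm a)) &
          (forall a b, nrm (mul a b) <= nrm a * nrm b)] &
      (forall u : nat -> A,
        (forall e : R, 0 < e -> exists N, forall m n, (N <= m)%N -> (N <= n)%N ->
             nrm (u m - u n) < e) ->
        exists l, forall e : R, 0 < e -> exists N, forall n, (N <= n)%N ->
             nrm (u n - l) < e)].

Definition is_char (phi : A -> C) : Prop :=
  [/\ (forall a b, phi (a + b) = phi a + phi b),
      (forall (k : C) a, phi (k *: a) = k * phi a),
      (forall a b, phi (mul a b) = phi a * phi b) &
      exists a, phi a <> 0].

Definition Delta := {phi : A -> C | is_char phi}.

Definition gelfand (a : A) : Delta -> C := fun mu => sval mu a.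

(* Gelfand topology: the weakest topology making all gelfand a continuous,
   i.e. the topology generated by the basic sets
   { nu | |nu(a_i) - mu(a_i)| < e, i < k }. *)
Definition gopen (U : set Delta) : Prop :=
  forall mu, U mu -> exists (k : nat) (F : 'I_k -> A) (e : R), 0 < e /\
    forall nu : Delta, (forall i, `|sval nu (F i) - sval mu (F i)| < real_complex R e) -> U nu.

Definition gclosed (F : set Delta) : Prop := gopen (~` F).

Definition gdense (D : set Delta) : Prop :=
  forall U, gopen U -> U !=set0 -> (U `&` D) !=set0.

Definition semisimple : Prop := injective gelfand.

Definition completely_regular : Prop :=
  forall (F : set Delta) (phi0 : Delta), gclosed F -> ~ F phi0 ->
    exists a, (forall nu, F nu -> sval nu a = 0) /\ sval phi0 a <> 0.

Definition algebra_automorphism (s s' : A -> A) : Prop :=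
  [/\ (forall a b, s (a + b) = s a + s b),
      (forall (k : C) a, s (k *: a) = k *: s a),
      (forall a b, s (mul a b) = mul (s a) (s b)),
      cancel s s' & cancel s' s].

Definition autz (s s' : A -> A) (n : int) : A -> A :=
  match n with Posz k => iter k s | Negz k => iter k.+1 s' end.

(* mu |-> mu o t on Delta (identity if mu o t were not a character, which
   never happens for t an automorphism) *)
Definition compD (t : A -> A) (mu : Delta) : Delta :=
  match pselect (is_char (sval mu \o t)) with
  | left h => exist _ (sval mu \o t) h
  | right _ => mu
  end.

Definition sigma (s s' : A -> A) : Delta -> Delta := compD s'.
Definition sigma_inv (s s' : A -> A) : Delta -> Delta := compD s.
Definition sigmaz (s s' : A -> A) (n : int) : Delta -> Delta :=
  match n with Posz k => iter k (sigma s s') | Negz k => iter k.+1 (sigma_inv s s') end.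

Definition nonperiodic (s s' : A -> A) : set Delta :=
  [set mu | forall n : int, n != 0 -> sigmaz s s' n mu <> mu].

End Defs.

Section Crossed.
Variable R : realType.
Local Notation C := R[i].
Variable B : nmodType.
Variable mulB : B -> B -> B.
Variable scB : C -> B -> B.
Variable Psi : int -> B -> B.   (* Psi n = n-th power of the automorphism *)
Variable P : set B.             (* the algebra of coefficients, inside B *)

Definition cp_elt (x : int -> B) : Prop :=
  finite_set [set n | x n <> 0] /\ forall n, P (x n).

(* (b_n d^n)(c_m d^m) = b_n Psi^n(c_m) d^(n+m) *)
Definition cp_mul (x y : int -> B) : int -> B :=
  fun k => (\sum_(n \in [set: int]) mulB (x n) (Psi n (y (k - n))))%R.
Definition cp_add (x y : int -> B) : int -> B := fun n => x n + y n.
Definition cp_scale (c : C) (x : int -> B) : int -> B := fun n => scB c (x n).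

Definition cp_subalgebra (S : set (int -> B)) : Prop :=
  [/\ S `<=` cp_elt, S (fun _ => 0),
      (forall x y, S x -> S y -> S (cp_add x y)),
      (forall c x, S x -> S (cp_scale c x)) &
      (forall x y, S x -> S y -> S (cp_mul x y))].

Definition cp_abelian (S : set (int -> B)) : Prop :=
  forall x y, S x -> S y -> cp_mul x y = cp_mul y x.

Definition cp_base : set (int -> B) :=
  [set x | cp_elt x /\ forall n, n != 0 -> x n = 0].

Definition maximal_abelian : Prop :=
  [/\ cp_subalgebra cp_base, cp_abelian cp_base &
      forall S, cp_subalgebra S -> cp_abelian S -> cp_base `<=` S -> S = cp_base].
End Crossed.

Definition hat_sigmaz (R : realType) (A : lmodType R[i]) (mul : A -> A -> A)
  (s s' : A -> A) (n : int) (f : Delta mul -> R[i]) : Delta mul -> R[i] :=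
  f \o sigmaz s s' (- n).

Arguments compD [R A] mul t mu.
Arguments sigma [R A] mul s s' _.
Arguments sigma_inv [R A] mul s s' _.
Arguments sigmaz [R A] mul s s' n _.
Arguments nonperiodic [R A] mul s s' _.
Arguments hat_sigmaz [R A] mul s s' n f _.
Arguments gelfand [R A] mul a _.

(* The coefficient algebra of the crossed product sits inside its commutant,
   which consists of the elements sum_n f_n delta^n such that f_n is supported
   in the fixed points of sigma^n; this commutant is an abelian subalgebra.
   If the non-periodic points are dense, a Gelfand transform f_n (n <> 0)
   vanishing on them is zero, so the commutant is the coefficient algebra,
   which is then maximal abelian.  Conversely, if they are not dense, a Baire
   argument gives n > 0 and a nonempty open V on which sigma^n is the
   identity; complete regularity provides f with support in V, and
   f delta^n is in the commutant but not in the coefficient algebra.  The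
   Baire argument runs through nested closed basic neighbourhoods whose
   intersection is found as an ultrafilter limit: characters are bounded by
   the norm, and a limit staying away from 0 at one point is a character.
   Both algebras of the theorem are treated at once by evaluating the
   coefficients injectively as functions on Delta(A). *)

From Pilot Require Import Defs.
From mathcomp Require Import all_boot all_algebra.
From mathcomp Require Import complex.
From mathcomp Require Import all_classical all_reals.
From mathcomp Require Import zify finmap lra ring.
Import mathcomp.order.order.Order.TTheory GRing.Theory Num.Theory Normc.
Local Open Scope ring_scope.
Local Open Scope classical_set_scope.
Local Open Scope complex_scope.

Section ComplexModulus.
Context {R : realType}.
Implicit Types (z w : R[i]) (e : R).

Lemma normr_normc z : `|z| = (normc z)%:C.
Proof. by case: z. Qed.

Lemma normc_ge0 z : 0 <= normc z.
Proof. by case: z => a b; exact: sqrtr_ge0. Qed.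

Lemma normc_ltcR z e : (`|z| < e%:C) = (normc z < e).
Proof. by rewrite normr_normc ltcR. Qed.

Lemma normcD z w : normc (z + w) <= normc z + normc w.
Proof. by have := ler_normD z w; rewrite !normr_normc -rmorphD lecR. Qed.

Lemma normcN z : normc (- z) = normc z.
Proof. by apply: complexI; rewrite -!normr_normc normrN. Qed.

Lemma normcB z w : normc (z - w) = normc (w - z).
Proof. by rewrite -normcN opprB. Qed.

Lemma normc_gt0 z : z != 0 -> 0 < normc z.
Proof.
by move=> z0; rewrite lt0r normc_ge0 andbT; apply: contra z0 => /eqP/eq0_normc ->.
Qed.

Lemma Re_le_normc z : `|complex.Re z| <= normc z.
Proof.
case: z => a b /=; rewrite -sqrtr_sqr ler_sqrt ?addr_ge0 ?sqr_ge0 //.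
by rewrite lerDl sqr_ge0.
Qed.

Lemma Im_le_normc z : `|complex.Im z| <= normc z.
Proof.
case: z => a b /=; rewrite -sqrtr_sqr ler_sqrt ?addr_ge0 ?sqr_ge0 //.
by rewrite lerDr sqr_ge0.
Qed.

Lemma normc_le_ReIm z : normc z <= `|complex.Re z| + `|complex.Im z|.
Proof.
case: z => a b /=; rewrite -[X in _ <= X]ger0_norm ?addr_ge0 // -sqrtr_sqr.
rewrite ler_sqrt ?sqr_ge0 // sqrrD -(real_normK (num_real a)) -(real_normK (num_real b)).
by have := mulr_ge0 (normr_ge0 a) (normr_ge0 b); lra.
Qed.

End ComplexModulus.

Section Characters.
Context {R : realType} {A : lmodType R[i]} {mul : A -> A -> A}.
Implicit Types (mu nu : Delta mul) (a b : A).

Lemma charD mu a b : sval mu (a + b) = sval mu a + sval mu b.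
Proof. by case: (svalP mu). Qed.

Lemma charZ mu k a : sval mu (k *: a) = k * sval mu a.
Proof. by case: (svalP mu). Qed.

Lemma charM mu a b : sval mu (mul a b) = sval mu a * sval mu b.
Proof. by case: (svalP mu). Qed.

Lemma char0 mu : sval mu 0 = 0.
Proof. by rewrite -(scale0r (0 : A)) charZ mul0r. Qed.

Lemma charB mu a b : sval mu (a - b) = sval mu a - sval mu b.
Proof. by rewrite -scaleN1r charD charZ mulN1r. Qed.

Lemma char_neq0 mu : exists a, sval mu a != 0.
Proof. by case: (svalP mu) => _ _ _ [a /eqP]; exists a. Qed.

Lemma Delta_ext mu nu : (forall a, sval mu a = sval nu a) -> mu = nu.
Proof.
case: mu nu => [f fchar] [g gchar] /= /funext efg; subst g.
by congr exist; exact: Prop_irrelevance.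
Qed.

End Characters.

Section GelfandTopology.
Context {R : realType} {A : lmodType R[i]} {mul : A -> A -> A}.
Local Notation D := (Delta mul).
Implicit Types (mu nu : D) (Fs : seq A) (U V : set D).

Definition gball mu Fs (e : R) : set D :=
  [set nu | forall f, f \in Fs -> normc (sval nu f - sval mu f) < e].

Definition gcball mu Fs (e : R) : set D :=
  [set nu | forall f, f \in Fs -> normc (sval nu f - sval mu f) <= e].

Lemma gopen_ballP U :
  gopen U <-> forall mu, U mu -> exists Fs e, 0 < e /\ gball mu Fs e `<=` U.
Proof.
split=> [openU mu Umu | balls mu Umu].
  have [k [F [e [e0 FeU]]]] := openU mu Umu.
  exists [seq F i | i <- enum 'I_k], e; split => // nu nuF; apply: FeU => i.
  by rewrite normc_ltcR; apply: nuF; apply: map_f; rewrite mem_enum.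
have [Fs [e [e0 FsU]]] := balls mu Umu.
exists (size Fs), (fun i => nth 0 Fs i), e; split => // nu nuF.
apply: FsU => f fFs; rewrite -normc_ltcR -(nth_index 0 fFs).
by apply: (nuF (Ordinal _)); rewrite index_mem.
Qed.

Lemma gball_center mu Fs e : 0 < e -> gball mu Fs e mu.
Proof. by move=> e0 f _; rewrite subrr normc0. Qed.

Lemma gball_sub_gcball mu Fs e : gball mu Fs e `<=` gcball mu Fs e.
Proof. by move=> nu nuF f /nuF /ltW. Qed.

Lemma gcball_sub_gball mu Fs e e' : e < e' -> gcball mu Fs e `<=` gball mu Fs e'.
Proof. by move=> ee' nu nuF f /nuF /le_lt_trans; apply. Qed.

Lemma gopen_gball mu Fs e : gopen (gball mu Fs e).
Proof.
apply/gopen_ballP => nu nuF.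
pose dist f := normc (sval nu f - sval mu f).
pose M := \big[Num.max/e - 1]_(f <- Fs | f \in Fs) dist f.
have Me : M < e by apply: bigmax_lt => [|f /nuF //]; lra.
exists Fs, (e - M); split => [|rho rhoF f fFs]; first by rewrite subr_gt0.
have distM : dist f <= M by exact: le_bigmax_seq.
rewrite /dist in distM.
have := normcD (sval rho f - sval nu f) (sval nu f - sval mu f).
by rewrite addrA subrK; have := rhoF f fFs; lra.
Qed.

Lemma gopenI {U V} : gopen U -> gopen V -> gopen (U `&` V).
Proof.
move=> /gopen_ballP openU /gopen_ballP openV; apply/gopen_ballP => mu [Umu Vmu].
have [F1 [e1 [e10 F1U]]] := openU mu Umu.
have [F2 [e2 [e20 F2V]]] := openV mu Vmu.
exists (F1 ++ F2), (Num.min e1 e2); split; first by rewrite lt_min e10 e20.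
move=> nu nuF; split; [apply: F1U | apply: F2V] => f fF;
  by have := nuF f; rewrite mem_cat fF ?orbT lt_min => /(_ isT) /andP[lt1 lt2].
Qed.

Lemma gopen_char_neq0 a : gopen [set mu : D | sval mu a != 0].
Proof.
apply/gopen_ballP => mu /= mua; exists [:: a], (normc (sval mu a)).
split=> [|nu /(_ a (mem_head _ _))]; first exact: normc_gt0.
by apply: contraTneq => ->; rewrite sub0r normcN ltxx.
Qed.

End GelfandTopology.

Section RealSequences.
Context {R : realType}.

Lemma bernoulli_le (h : R) n : 0 <= h -> 1 + n%:R * h <= (1 + h) ^+ n.
Proof.
move=> h0; elim: n => [|n IH]; first by rewrite mul0r addr0 expr0.
have : (1 + h) * (1 + n%:R * h) <= (1 + h) * (1 + h) ^+ n.
  by rewrite ler_wpM2l // addr_ge0.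
have : 0 <= n%:R * h * h by rewrite !mulr_ge0.
by rewrite exprS -natr1; lra.
Qed.

Lemma exists_exprn_lt (q c : R) : 0 <= q -> q < 1 -> 0 < c -> exists N : nat, q ^+ N < c.
Proof.
move=> q0 q1 c0; have [->|qn0] := eqVneq q 0; first by exists 1%N; rewrite expr1.
have qp : 0 < q by rewrite lt0r qn0.
pose h := q^-1 - 1.
have h0 : 0 < h by rewrite subr_gt0 invf_gt1.
pose N := Num.Def.archi_bound ((c * h)^-1).
have hN : (c * h)^-1 < N%:R by apply: archi_boundP; rewrite invr_ge0 ltW ?mulr_gt0.
exists N; rewrite -[q]invrK exprVn invf_plt ?posrE ?exprn_gt0 ?invr_gt0 //.
have -> : q^-1 = 1 + h by rewrite /h addrC subrK.
apply: lt_le_trans (bernoulli_le _ N (ltW h0)).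
have : c^-1 < N%:R * h by rewrite -ltr_pdivrMr // -invfM.
by lra.
Qed.

Lemma geometric_tail (q : R) n m : (n <= m)%N ->
  (1 - q) * \sum_(n <= i < m) q ^+ i.+1 = q ^+ n.+1 - q ^+ m.+1.
Proof.
move=> nm; rewrite mulr_sumr (telescope_sumr_eq (fun k => - q ^+ k.+1) _ nm).
  by rewrite opprK addrC.
by move=> k _; rewrite [q ^+ k.+2]exprS; ring.
Qed.

End RealSequences.

Section BanachAlgebra.
Context {R : realType} {A : lmodType R[i]} {mul : A -> A -> A} {nrm : A -> R}.
Hypothesis HA : comm_banach_algebra mul nrm.

Lemma mulDl a b c : mul (a + b) c = mul a c + mul b c.
Proof. by case: HA => [[_ _ mulDl _] _ _]; apply: mulDl. Qed.

Lemma mulZl k a b : mul (k *: a) b = k *: mul a b.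
Proof. by case: HA => [[_ _ _ mulZl] _ _]; apply: mulZl. Qed.

Lemma mulBl a b c : mul (a - b) c = mul a c - mul b c.
Proof. by rewrite -scaleN1r mulDl mulZl scaleN1r. Qed.

Lemma mul_suml (I : Type) (r : seq I) (F : I -> A) c :
  mul (\sum_(i <- r) F i) c = \sum_(i <- r) mul (F i) c.
Proof.
elim: r => [|x r IH]; last by rewrite !big_cons mulDl IH.
by rewrite !big_nil; have := mulBl 0 0 c; rewrite !subrr.
Qed.

Lemma nrm_eq0 a : nrm a = 0 -> a = 0.
Proof. by case: HA => _ [nrm_eq0 _ _ _] _; apply: nrm_eq0. Qed.

Lemma nrmD a b : nrm (a + b) <= nrm a + nrm b.
Proof. by case: HA => _ [_ nrmD _ _] _; apply: nrmD. Qed.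

Lemma nrmM a b : nrm (mul a b) <= nrm a * nrm b.
Proof. by case: HA => _ [_ _ _ nrmM] _; apply: nrmM. Qed.

Lemma nrmZ k a : nrm (k *: a) = normc k * nrm a.
Proof.
case: HA => _ [_ _ nrmZ _] _; apply: complexI.
by rewrite nrmZ normr_normc -rmorphM.
Qed.

Lemma nrmN a : nrm (- a) = nrm a.
Proof. by rewrite -scaleN1r nrmZ normcN normc1 mul1r. Qed.

Lemma nrmB a b : nrm (a - b) = nrm (b - a).
Proof. by rewrite -nrmN opprB. Qed.

Lemma nrm_ge0 a : 0 <= nrm a.
Proof. by have := nrmD a (- a); rewrite subrr nrmN -(scale0r (0 : A)) nrmZ normc0; lra. Qed.

Lemma nrm_sum (I : Type) (r : seq I) (F : I -> A) :
  nrm (\sum_(i <- r) F i) <= \sum_(i <- r) nrm (F i).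
Proof.
elim: r => [|x r IH]; last by rewrite !big_cons (le_trans (nrmD _ _)) ?lerD2l.
by rewrite !big_nil -(scale0r (0 : A)) nrmZ normc0 mul0r.
Qed.

Lemma cauchy_geometric_series (u : nat -> A) (q : R) :
  q < 1 -> (forall i, nrm (u i) <= q ^+ i.+1) ->
  forall e, 0 < e -> exists N, forall m n, (N <= m)%N -> (N <= n)%N ->
    nrm (\sum_(0 <= i < m) u i - \sum_(0 <= i < n) u i) < e.
Proof.
move=> q1 uq e e0.
have q0 : 0 <= q by apply: le_trans (nrm_ge0 (u 0%N)) _; rewrite -[q]expr1 uq.
have tail n m : (n <= m)%N ->
    nrm (\sum_(0 <= i < m) u i - \sum_(0 <= i < n) u i) <= q ^+ n.+1 / (1 - q).
  move=> nm; rewrite (@big_cat_nat _ _ _ n 0 m) //= addrAC subrr add0r.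
  apply: le_trans (nrm_sum _ _ _) _; apply: le_trans (ler_sum _ (fun i _ => uq i)) _.
  rewrite ler_pdivlMr ?subr_gt0 // mulrC geometric_tail // gerBl.
  exact: exprn_ge0.
have q1' : 0 < 1 - q by rewrite subr_gt0.
have [N qN] := exists_exprn_lt _ _ q0 q1 (mulr_gt0 e0 q1').
have small k : (N <= k)%N -> q ^+ k.+1 / (1 - q) < e.
  move=> Nk; rewrite ltr_pdivrMr //; apply: le_lt_trans qN.
  by apply: ler_wiXn2l => //; [exact: ltW | exact: leqW].
exists N => m n Nm Nn; have [nm|mn] := leqP n m.
  exact: le_lt_trans (tail _ _ nm) (small _ Nn).
by rewrite nrmB; exact: le_lt_trans (tail _ _ (ltnW mn)) (small _ Nm).
Qed.

(* [c = b + c b] says that [1 + c] is the inverse of [1 - b] in the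
   unitization; [c] is the Neumann series [sum_(i >= 1) b ^ i]. *)
Lemma quasi_inverse b : nrm b < 1 -> exists c, c = b + mul c b.
Proof.
move=> b1; pose u i := iter i (mul^~ b) b.
have uq i : nrm (u i) <= nrm b ^+ i.+1.
  elim: i => [|i IH]; first by rewrite expr1.
  by rewrite exprSr (le_trans (nrmM _ _)) ?ler_wpM2r ?nrm_ge0.
pose S N := \sum_(0 <= i < N) u i.
have S_rec N : S N.+1 = b + mul (S N) b.
  by rewrite /S big_nat_recl // mul_suml.
case: HA => _ _ /(_ S (cauchy_geometric_series _ _ b1 uq)) [c Sc].
exists c; apply/eqP; rewrite -subr_eq0; apply/eqP/nrm_eq0/le_anti.
rewrite nrm_ge0 andbT; apply/ler_addgt0Pr => e e0; rewrite add0r.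
have e20 : 0 < e / 2 by rewrite divr_gt0.
have [N SN] := Sc (e / 2) e20.
have -> : c - (b + mul c b) = (c - S N.+1) + mul (S N - c) b.
  by rewrite S_rec mulBl !opprD !addrA subrK.
have SN1 : nrm (c - S N.+1) < e / 2 by rewrite nrmB; apply: SN.
have SNb : nrm (mul (S N - c) b) <= e / 2.
  apply: le_trans (nrmM _ _) _; rewrite -[e / 2]mulr1.
  by apply: ler_pM; rewrite ?nrm_ge0 ?ltW ?SN.
by apply: le_trans (nrmD _ _) _; lra.
Qed.

Lemma char_bound (nu : Delta mul) a : normc (sval nu a) <= nrm a.
Proof.
rewrite leNgt; apply/negP => nua_gt.
have nua0 : sval nu a != 0.
  by apply: contraTneq nua_gt => ->; rewrite normc0 -leNgt nrm_ge0.
pose b := (sval nu a)^-1 *: a.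
have [c cE] : exists c, c = b + mul c b.
  apply: quasi_inverse.
  by rewrite nrmZ normcV mulrC ltr_pdivrMr ?normc_gt0 // mul1r.
have := congr1 (sval nu) cE; rewrite charD charM charZ mulVf // mulr1.
move=> /(congr1 (fun y => y - sval nu c)); rewrite subrr addrK => /eqP.
by rewrite eq_sym oner_eq0.
Qed.

End BanachAlgebra.

Definition flim {R : realType} {T : Type} (G : set_system T) (f : T -> R[i]) (L : R[i]) :=
  forall e : R, 0 < e -> G [set t | normc (f t - L) < e].

Section FilterLimits.
Context {R : realType} {T : Type} {G : set_system T} {PG : ProperFilter G}.
Implicit Types (f g : T -> R[i]) (L M : R[i]).
Local Notation flim := (flim G).

Lemma flim_unique f L M : flim f L -> flim f M -> L = M.
Proof.
move=> fL fM; apply/eqP; rewrite -subr_eq0; apply/eqP/eq0_normc/le_anti.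
rewrite normc_ge0 andbT.
apply/ler_addgt0Pr => e e0; rewrite add0r.
have e20 : 0 < e / 2 by rewrite divr_gt0.
have [t [/= ftL ftM]] := filter_ex (filterI (fL _ e20) (fM _ e20)).
have := normcD (L - f t) (f t - M); rewrite addrA subrK normcB; lra.
Qed.

Lemma flimD f g L M : flim f L -> flim g M -> flim (fun t => f t + g t) (L + M).
Proof.
move=> fL gM e e0; have e20 : 0 < e / 2 by rewrite divr_gt0.
apply: filterS (filterI (fL _ e20) (gM _ e20)) => t [/= ftL gtM].
have -> : f t + g t - (L + M) = (f t - L) + (g t - M) by rewrite opprD addrACA.
by apply: le_lt_trans (normcD _ _) _; lra.
Qed.

Lemma flimM f g L M (K : R) : (forall t, normc (g t) <= K) ->
  flim f L -> flim g M -> flim (fun t => f t * g t) (L * M).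
Proof.
move=> gK fL gM e e0.
have K0 : 0 <= K.
  by have [t _] := filter_ex (@filterT _ G _); apply: le_trans (normc_ge0 _) (gK t).
pose d := e / (K + normc L + 1).
have d0 : 0 < d by rewrite divr_gt0 // ltr_wpDl ?addr_ge0 ?normc_ge0.
apply: filterS (filterI (fL _ d0) (gM _ d0)) => t [/= ftL gtM].
have -> : f t * g t - L * M = (f t - L) * g t + L * (g t - M) by ring.
apply: le_lt_trans (normcD _ _) _; rewrite !normcM.
have : normc (f t - L) * normc (g t) <= d * K.
  by apply: ler_pM; [exact: normc_ge0 | exact: normc_ge0 | exact: ltW | exact: gK].
have : normc L * normc (g t - M) <= normc L * d.
  by apply: ler_wpM2l; [exact: normc_ge0 | exact: ltW].
have : d * (K + normc L + 1) = e.
  by rewrite mulfVK // lt0r_neq0 // ltr_wpDl ?addr_ge0 ?normc_ge0.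
by nra.
Qed.

Lemma flim_cst L : flim (fun => L) L.
Proof. by move=> e e0; apply: filterS filterT => t _ /=; rewrite subrr normc0. Qed.

End FilterLimits.

Section UltraLimits.
Context {R : realType} {T : Type} {G : set_system T} {UG : UltraFilter G}.

Lemma ultra_real_limit (g : T -> R) (K : R) : (forall t, `|g t| <= K) ->
  exists L, forall e, 0 < e -> G [set t | `|g t - L| < e].
Proof.
move=> gK; pose S := [set x : R | G [set t | x <= g t]].
have supS : has_sup S.
  split.
    exists (- K); apply: filterS filterT => t _ /=.
    by have := gK t; rewrite ler_norml => /andP[].
  exists K => x /filter_ex [t /= xg]; apply: le_trans xg _.
  by have := gK t; rewrite ler_norml => /andP[].
exists (sup S) => e e0.
have [x Sx supx] := sup_adherent e0 supS.
have above : G [set t | sup S - e < g t] by apply: filterS Sx => t /=; apply: lt_le_trans.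
have below : G [set t | g t < sup S + e].
  have [//|notbelow] := in_ultra_setVsetC [set t | g t < sup S + e] UG.
  have /(sup_upper_bound supS) : S (sup S + e).
    by apply: filterS notbelow => t /= /negP; rewrite -leNgt.
  by lra.
apply: filterS (filterI above below) => t [/= gt1 gt2]; rewrite ltr_norml.
by apply/andP; split; lra.
Qed.

Lemma ultra_limit (f : T -> R[i]) (K : R) :
  (forall t, normc (f t) <= K) -> exists L, flim G f L.
Proof.
move=> fK.
have [Lr Lr_lim] := ultra_real_limit (fun t => complex.Re (f t)) K
  (fun t => le_trans (Re_le_normc _) (fK t)).
have [Li Li_lim] := ultra_real_limit (fun t => complex.Im (f t)) K
  (fun t => le_trans (Im_le_normc _) (fK t)).
exists (Lr +i* Li)%C => e e0; have e20 : 0 < e / 2 by rewrite divr_gt0.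
apply: filterS (filterI (Lr_lim _ e20) (Li_lim _ e20)) => t [] /=.
case: (f t) => x y Lr_e Li_e; apply: le_lt_trans (normc_le_ReIm _) _.
by rewrite /= in Lr_e Li_e *; lra.
Qed.

End UltraLimits.

Section SpectrumCompactness.
Context {R : realType} {A : lmodType R[i]} {mul : A -> A -> A} {nrm : A -> R}.
Hypothesis HA : comm_banach_algebra mul nrm.
Local Notation D := (Delta mul).
Local Notation evalD a := (fun nu : D => sval nu a).

Lemma ultra_pointwise_limit {G : set_system D} : UltraFilter G ->
  exists phi : A -> R[i], forall a, flim G (evalD a) (phi a).
Proof.
move=> UG.
have [phi phiP] := choice (fun a => ultra_limit (evalD a) (nrm a) (char_bound HA ^~ a)).
by exists phi.
Qed.

Section PointwiseLimit.
Context {G : set_system D} {PG : ProperFilter G}.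
Context {phi : A -> R[i]} (phiP : forall a, flim G (evalD a) (phi a)).

Lemma pointwise_limit_is_char a0 (d : R) :
  0 < d -> G [set nu | d <= normc (sval nu a0)] -> is_char mul phi.
Proof.
move=> d0 Gd; split=> [a b | k a | a b |].
- apply: flim_unique (phiP (a + b)) _.
  rewrite (funext (fun nu : D => charD nu a b)); exact: flimD.
- apply: flim_unique (phiP (k *: a)) _.
  rewrite (funext (fun nu : D => charZ nu k a)).
  exact: flimM (fun nu => char_bound HA nu a) (flim_cst k) (phiP a).
- apply: flim_unique (phiP (mul a b)) _.
  rewrite (funext (fun nu : D => charM nu a b)).
  exact: flimM (fun nu => char_bound HA nu b) (phiP a) (phiP b).
- exists a0 => phia0.
  have [nu [/= dnu]] := filter_ex (filterI Gd (phiP a0 _ d0)).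
  by rewrite phia0 subr0; lra.
Qed.

Lemma pointwise_limit_gcball mu Fs r : G (gcball mu Fs r) ->
  forall f, f \in Fs -> normc (phi f - sval mu f) <= r.
Proof.
move=> Gball f fFs; apply/ler_addgt0Pr => e e0.
have [nu [/= nuball nuf]] := filter_ex (filterI Gball (phiP f _ e0)).
have := normcD (phi f - sval nu f) (sval nu f - sval mu f).
by rewrite addrA subrK normcB; have := nuball f fFs; lra.
Qed.

End PointwiseLimit.

Lemma nested_gcballs_meet (Cl : nat -> set D) a0 (d : R) : 0 < d ->
    (forall k, exists mu Fs r, Cl k = gcball mu Fs r) ->
    (forall k, Cl k.+1 `<=` Cl k) -> (forall k, Cl k !=set0) ->
    Cl 0%N `<=` [set nu | d <= normc (sval nu a0)] ->
  exists phi : D, forall k, Cl k phi.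
Proof.
move=> d0 Clball Cl_succ Cl_ne Cl_bdd.
have Cl_decr m n : (m <= n)%N -> Cl n `<=` Cl m.
  move=> /subnK <-; elim: (n - m)%N => // i IH.
  by rewrite addSn; apply: subset_trans (Cl_succ _) IH.
have FCl : Filter (filter_from setT Cl).
  apply: filter_from_filter => [|i j _ _]; first by exists 0%N.
  by exists (maxn i j) => // nu Clnu; split; apply: Cl_decr Clnu; rewrite ?leq_maxl ?leq_maxr.
have [G [UG ClG]] := ultraFilterLemma (filter_from_proper FCl (fun k _ => Cl_ne k)).
have [phi phiP] := ultra_pointwise_limit UG.
have ClG' k : G (Cl k) by apply: ClG; exists k.
have phi_char : is_char mul phi.
  exact: pointwise_limit_is_char phiP _ _ d0 (filterS Cl_bdd (ClG' 0%N)).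
exists (exist _ phi phi_char) => k; have [mu [Fs [r Clk]]] := Clball k.
by rewrite Clk => f; apply: (pointwise_limit_gcball phiP); rewrite -Clk.
Qed.

End SpectrumCompactness.

Section Automorphism.
Context {R : realType} {A : lmodType R[i]} {mul : A -> A -> A} {s s' : A -> A}.
Hypothesis Hs : algebra_automorphism mul s s'.

Lemma algebra_automorphismV : algebra_automorphism mul s' s.
Proof.
case: Hs => sD sZ sM ss' s's; split => // [a b | k a | a b]; apply: (can_inj ss').
- by rewrite sD !s's.
- by rewrite sZ !s's.
- by rewrite sM !s's.
Qed.

Lemma is_char_comp (phi : A -> R[i]) : is_char mul phi -> is_char mul (phi \o s).
Proof.
case: Hs => sD sZ sM ss' s's [phiD phiZ phiM [a phia]].
split=> [x y | k x | x y |] /=; rewrite ?sD ?sZ ?sM //.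
by exists (s' a); rewrite /= s's.
Qed.

Lemma compD_val (mu : Delta mul) : sval (compD mul s mu) = sval mu \o s.
Proof.
rewrite /compD; case: pselect => // nchar; exfalso; apply: nchar.
exact/is_char_comp/(svalP mu).
Qed.

Lemma iter_compD_val k (mu : Delta mul) a :
  sval (iter k (compD mul s) mu) a = sval mu (iter k s a).
Proof.
elim: k a => [|k IH] a //=.
by rewrite compD_val /= IH -iterSr.
Qed.

Lemma autzS n a : autz s s' (n + 1) a = s (autz s s' n a).
Proof.
case: Hs => _ _ _ _ s's; case: n => [k|[|k]]; first by rewrite /= addn1.
- have -> : Negz 0 + 1 = 0 by rewrite NegzE; lia.
  by rewrite /= s's.
- have -> : Negz k.+1 + 1 = Negz k by rewrite !NegzE; lia.
  by rewrite /= s's.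
Qed.

Lemma autzD m n a : autz s s' (m + n) a = autz s s' m (autz s s' n a).
Proof.
have autzB1 k b : autz s s' (k - 1) b = s' (autz s s' k b).
  by case: Hs => _ _ _ ss' _; rewrite -{2}(subrK 1 k) autzS ss'.
case: m => [k|k]; elim: k => [|k IH]; rewrite ?add0r //.
- have -> : Posz k.+1 + n = (Posz k + n) + 1 by lia.
  by rewrite autzS IH.
- have -> : Negz 0 + n = n - 1 by rewrite NegzE; lia.
  by rewrite autzB1.
- have -> : Negz k.+1 + n = (Negz k + n) - 1 by rewrite !NegzE; lia.
  by rewrite autzB1 IH.
Qed.

End Automorphism.

Section Periodicity.
Context {R : realType} {A : lmodType R[i]} {mul : A -> A -> A} {s s' : A -> A}.
Hypothesis Hs : algebra_automorphism mul s s'.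
Local Notation D := (Delta mul).
Local Notation sz := (sigmaz mul s s').

Lemma sigmazE n (mu : D) a : sval (sz n mu) a = sval mu (autz s s' (- n) a).
Proof.
case: n => [k|k]; last exact: (iter_compD_val Hs k.+1).
have:= iter_compD_val (algebra_automorphismV Hs) k mu a.
by case: k.
Qed.

Lemma sigmaz_fixP n (mu : D) :
  sz n mu = mu <-> forall a, sval mu (autz s s' (- n) a) = sval mu a.
Proof.
split=> [fix_mu a | fix_mu]; first by rewrite -sigmazE fix_mu.
by apply: Delta_ext => a; rewrite sigmazE.
Qed.

Lemma sigmaz_fixD n m (mu : D) : sz n mu = mu -> sz m mu = mu -> sz (n + m) mu = mu.
Proof.
move=> /sigmaz_fixP fixn /sigmaz_fixP fixm; apply/sigmaz_fixP => a.
by rewrite opprD (autzD Hs) fixn fixm.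
Qed.

Lemma sigmaz_fixN n (mu : D) : sz n mu = mu -> sz (- n) mu = mu.
Proof.
move=> /sigmaz_fixP fixn; apply/sigmaz_fixP => a.
by rewrite opprK -(fixn (autz s s' n a)) -(autzD Hs) addNr.
Qed.

Lemma sigmaz_moved_nbhd n (mu : D) : sz n mu <> mu ->
  exists c, sval mu c != 0 /\ forall nu : D, sval nu c != 0 -> sz n nu <> nu.
Proof.
move=> /sigmaz_fixP /existsNP [b /eqP mub].
exists (autz s s' (- n) b - b); split=> [|nu]; first by rewrite charB subr_eq0.
by rewrite charB subr_eq0 => /eqP nub /sigmaz_fixP.
Qed.

Lemma gcball_sigmaz_moved n (O : set D) mu : gopen O -> O mu -> sz n mu <> mu ->
  exists Fs r, [/\ 0 < r, gcball mu Fs r `<=` O &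
                    forall nu, gcball mu Fs r nu -> sz n nu <> nu].
Proof.
move=> openO Omu /sigmaz_moved_nbhd [c [muc cmoved]].
have /gopen_ballP := gopenI openO (gopen_char_neq0 c).
move=> /(_ mu (conj Omu muc)) [Fs [e [e0 ballW]]].
have cball_W : gcball mu Fs (e / 2) `<=` O `&` [set nu : D | sval nu c != 0].
  apply: subset_trans ballW; apply: gcball_sub_gball.
  by rewrite ltr_pdivrMr // ltr_pMr // ltr1n.
exists Fs, (e / 2); split=> [|nu /cball_W []//|nu /cball_W [_ /cmoved]//].
by rewrite divr_gt0.
Qed.

End Periodicity.

Lemma dependent_choice {T : Type} (P : T -> Prop) (Q : nat -> T -> T -> Prop) x0 :
  P x0 -> (forall k x, P x -> exists2 y, P y & Q k x y) ->
  exists u : nat -> T, u 0%N = x0 /\ forall k, P (u k) /\ Q k (u k) (u k.+1).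
Proof.
move=> Px0 step.
have [f fP] : {f : nat * {x | P x} -> {x | P x} & forall kx, Q kx.1 (sval kx.2) (sval (f kx))}.
  apply: (@choice _ _ (fun kx y => Q kx.1 (sval kx.2) (sval y))) => -[k [x Px]].
  have [y Py Qy] := step k x Px.
  by exists (exist _ y Py).
pose g := fix g k := if k is k'.+1 then f (k', g k') else exist P x0 Px0.
by exists (fun k => sval (g k)); split=> // k; split; [exact: svalP | exact: fP (k, g k)].
Qed.

Section NonperiodicDensity.
Context {R : realType} {A : lmodType R[i]} {mul : A -> A -> A} {nrm : A -> R}.
Context {s s' : A -> A}.
Hypothesis HA : comm_banach_algebra mul nrm.
Hypothesis Hs : algebra_automorphism mul s s'.
Local Notation D := (Delta mul).
Local Notation sz := (sigmaz mul s s').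
Hypothesis fixpoints_interior0 : forall n : nat, (0 < n)%N ->
  forall V : set D, gopen V -> V !=set0 -> exists2 mu, V mu & sz n mu <> mu.
Local Notation ball b := (gball b.1.1 b.1.2 b.2).
Local Notation cball b := (gcball b.1.1 b.1.2 b.2).

Lemma moved_gcball_chain (O : set D) : gopen O -> O !=set0 ->
  exists Cl : nat -> set D,
    [/\ forall k, exists mu Fs r, Cl k = gcball mu Fs r,
        forall k, Cl k.+1 `<=` Cl k, forall k, Cl k !=set0, Cl 0%N `<=` O &
        forall k nu, Cl k nu -> sz k.+1 nu <> nu].
Proof.
move=> openO O_ne.
have shrink k (W : set D) : gopen W -> W !=set0 -> exists2 b : D * seq A * R,
    0 < b.2 & cball b `<=` W /\ forall nu, cball b nu -> sz k.+1 nu <> nu.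
  move=> openW /(fixpoints_interior0 k.+1 isT W openW) [mu Wmu mu_moved].
  have [Fs [r [r0 rW rmoved]]] := gcball_sigmaz_moved Hs _ _ _ openW Wmu mu_moved.
  by exists (mu, Fs, r).
have [b0 b0_pos [b0O b0_moved]] := shrink 0%N O openO O_ne.
have [u [u0 uP]] := dependent_choice (fun b => 0 < b.2)
  (fun k b b' => cball b' `<=` ball b /\ forall nu, cball b' nu -> sz k.+2 nu <> nu)
  b0 b0_pos
  (fun k b b_pos => shrink k.+1 _ (gopen_gball _ _ _) (ex_intro _ _ (gball_center _ _ _ b_pos))).
exists (fun k => cball (u k)); split=> [k | k | k | | [|k] nu].
- by exists (u k).1.1, (u k).1.2, (u k).2.
- exact: subset_trans (proj1 (uP k).2) (@gball_sub_gcball _ _ _ _ _ _).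
- by exists (u k).1.1; apply: gball_sub_gcball; exact: gball_center _ _ _ (uP k).1.
- by rewrite u0.
- by rewrite u0; exact: b0_moved.
- exact: (proj2 (uP k).2).
Qed.

Theorem nonperiodic_dense : gdense (nonperiodic mul s s').
Proof.
move=> U openU [mu0 Umu0].
have [a0 mu0a0] := char_neq0 mu0.
pose d := normc (sval mu0 a0) / 2.
have d0 : 0 < d by rewrite divr_gt0 // normc_gt0.
(* Staying in [O], where [|nu a0| >= d], makes the limit point a nonzero character. *)
pose O := U `&` gball mu0 [:: a0] d.
have O_bdd : O `<=` [set nu | d <= normc (sval nu a0)].
  move=> nu [_ /(_ a0 (mem_head _ _)) nu_a0] /=.
  have := normcD (sval nu a0) (sval mu0 a0 - sval nu a0).
  by rewrite addrC subrK normcB; rewrite /d in nu_a0 *; lra.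
have [Cl [Clball Cl_succ Cl_ne ClO Cl_moved]] :=
  moved_gcball_chain O (gopenI openU (gopen_gball _ _ _))
    (ex_intro _ mu0 (conj Umu0 (gball_center _ _ _ d0))).
have [phi Clphi] :=
  nested_gcballs_meet HA Cl a0 _ d0 Clball Cl_succ Cl_ne (subset_trans ClO O_bdd).
exists phi; split; first by have [] := ClO _ (Clphi 0%N).
case=> [[|k]|k] n0 phi_fixed //; first exact: Cl_moved k phi (Clphi k) phi_fixed.
exact: Cl_moved k phi (Clphi k) (sigmaz_fixN Hs _ _ phi_fixed).
Qed.

End NonperiodicDensity.

Section FiniteSums.
Context {I : choiceType} {V : nmodType}.
Implicit Type F : I -> V.

Lemma fsbig_neq0 F : \sum_(i \in [set: I]) F i != 0 -> exists i, F i != 0.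
Proof.
apply: contraPP => /forallNP F0; apply/negP; rewrite negbK; apply/eqP.
by apply: fsbig1 => i _; apply/eqP; rewrite -[_ == _]negbK; apply/negP; apply: F0.
Qed.

Lemma fsbig_single F i0 : (forall i, i != i0 -> F i = 0) ->
  \sum_(i \in [set: I]) F i = F i0.
Proof.
by move=> F0; rewrite (fsbigTE [fset i0]%fset) ?big_seq_fset1 // => i /[!inE] /F0.
Qed.

End FiniteSums.

Section CrossedProduct.
Context {R : realType} {A : lmodType R[i]} {mul : A -> A -> A} {nrm : A -> R}.
Context {s s' : A -> A}.
Hypotheses (HA : comm_banach_algebra mul nrm) (Hcr : completely_regular mul).
Hypothesis Hs : algebra_automorphism mul s s'.
Local Notation D := (Delta mul).
Local Notation sz := (sigmaz mul s s').

Variables (B : nmodType) (mulB : B -> B -> B) (scB : R[i] -> B -> B).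
Variables (Psi : int -> B -> B) (P : set B) (e : B -> D -> R[i]).
Hypotheses (eD : forall b c mu, e (b + c) mu = e b mu + e c mu)
  (eM : forall b c mu, e (mulB b c) mu = e b mu * e c mu)
  (eZ : forall k b mu, e (scB k b) mu = k * e b mu)
  (ePsi : forall n b mu, e (Psi n b) mu = e b (sz (- n) mu))
  (e_inj : forall b c, (forall mu, e b mu = e c mu) -> b = c).
Hypotheses (P0 : P 0) (PD : forall b c, P b -> P c -> P (b + c))
  (PZ : forall k b, P b -> P (scB k b)) (PM : forall b c, P b -> P c -> P (mulB b c))
  (PPsi : forall n b, P b -> P (Psi n b)).
Hypotheses (e_gelfand : forall b, P b -> exists a, e b = gelfand mul a)
  (gelfand_e : forall a, exists2 b, P b & e b = gelfand mul a).

(* The coefficients are evaluated by an injective homomorphism [e] into the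
   functions on Delta(A), onto the Gelfand image: [e] is the identity for the
   Gelfand image itself and the Gelfand transform for [A]. *)
Local Notation cp_elt := (cp_elt P).
Local Notation cp_mul := (cp_mul mulB Psi).
Local Notation cp_base := (cp_base P).

Lemma e0 mu : e 0 mu = 0.
Proof.
by have := eD 0 0 mu; rewrite addr0 => /(congr1 (fun z => z - e 0 mu)); rewrite subrr addrK.
Qed.

Lemma e_sum (I : Type) (r : seq I) (F : I -> B) mu :
  e (\sum_(i <- r) F i) mu = \sum_(i <- r) e (F i) mu.
Proof.
elim: r => [|i r IH]; first by rewrite !big_nil e0.
by rewrite !big_cons eD IH.
Qed.

Lemma mulB0l b : mulB 0 b = 0.
Proof. by apply: e_inj => mu; rewrite eM !e0 mul0r. Qed.

Lemma scaleB0 k : scB k 0 = 0.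
Proof. by apply: e_inj => mu; rewrite eZ !e0 mulr0. Qed.

Lemma cp_mulE x y k : cp_elt x ->
  cp_mul x y k = \sum_(n <- fset_set [set n | x n <> 0]) mulB (x n) (Psi n (y (k - n))).
Proof.
case=> finx _; rewrite /Defs.cp_mul (fsbigTE (fset_set [set n | x n <> 0])) // => n.
by rewrite in_fset_set // notin_setE /= => /contrapT ->; rewrite mulB0l.
Qed.

Lemma e_cp_mul x y k mu : cp_elt x ->
  e (cp_mul x y k) mu = \sum_(n \in [set: int]) e (x n) mu * e (y (k - n)) (sz (- n) mu).
Proof.
move=> xelt; rewrite cp_mulE // e_sum; case: xelt => finx _.
rewrite (fsbigTE (fset_set [set n | x n <> 0])) => [|n].
  by apply: eq_bigr => n _; rewrite eM ePsi.
by rewrite in_fset_set // notin_setE /= => /contrapT ->; rewrite e0 mul0r.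
Qed.

Lemma cp_elt0 : cp_elt (fun => 0).
Proof. by split=> //; apply: sub_finite_set (finite_set0 int) => n /=; apply. Qed.

Lemma cp_eltD x y : cp_elt x -> cp_elt y -> cp_elt (cp_add x y).
Proof.
move=> [finx Px] [finy Py]; split=> [|n]; last exact: PD.
have finxy : finite_set ([set n | x n <> 0] `|` [set n | y n <> 0]) by rewrite finite_setU.
apply: (sub_finite_set _ finxy) => n /= xy.
apply: contrapT => /not_orP[/contrapT x0 /contrapT y0].
by apply: xy; rewrite /cp_add x0 y0 addr0.
Qed.

Lemma cp_eltZ k x : cp_elt x -> cp_elt (cp_scale scB k x).
Proof.
move=> [finx Px]; split=> [|n]; last exact: PZ.
by apply: (sub_finite_set _ finx) => n /= + x0; rewrite /cp_scale x0 scaleB0.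
Qed.

Lemma cp_eltM x y : cp_elt x -> cp_elt y -> cp_elt (cp_mul x y).
Proof.
move=> xelt yelt; split=> [|k]; last first.
  rewrite cp_mulE //; apply: big_ind => // n _.
  by apply: PM; [exact: xelt.2 | apply: PPsi; exact: yelt.2].
case: (xelt) (yelt) => [finx _] [finy _].
apply: (sub_finite_set _ (finite_image (fun p => p.1 + p.2) (finite_setX finx finy))).
move=> k /= xyk; have [mu] : exists mu, e (cp_mul x y k) mu != 0.
  apply: contrapT => /forallNP xyk0; apply: xyk; apply: e_inj => mu.
  by rewrite e0; apply/eqP; rewrite -[_ == _]negbK; apply/negP; apply: xyk0.
rewrite e_cp_mul // => /fsbig_neq0 [n]; rewrite mulf_eq0 negb_or => /andP[xn ykn].
exists (n, k - n); last by rewrite /= addrC subrK.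
by split=> /= x0; [move: xn | move: ykn]; rewrite x0 e0 eqxx.
Qed.

Definition cp_mon (n : int) (b : B) : int -> B := fun m => if m == n then b else 0.

Lemma cp_elt_mon n b : P b -> cp_elt (cp_mon n b).
Proof.
move=> Pb; split=> [|m]; last by rewrite /cp_mon; case: ifP.
by apply: (sub_finite_set _ (finite_set1 n)) => m /=; rewrite /cp_mon; case: eqP.
Qed.

Lemma cp_base_mon0 b : P b -> cp_base (cp_mon 0 b).
Proof. by move=> Pb; split=> [|n /negbTE n0]; [exact: cp_elt_mon | rewrite /cp_mon n0]. Qed.

Lemma e_cp_mul_mon0 x c n mu : cp_elt x ->
  e (cp_mul x (cp_mon 0 c) n) mu = e (x n) mu * e c (sz (- n) mu).
Proof.
move=> xelt; rewrite e_cp_mul // (fsbig_single _ n) => [|m mn].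
  by rewrite /cp_mon subrr eqxx.
by rewrite /cp_mon subr_eq0 eq_sym (negbTE mn) e0 mulr0.
Qed.

Lemma e_cp_mon0_mul c x n mu : P c ->
  e (cp_mul (cp_mon 0 c) x n) mu = e c mu * e (x n) mu.
Proof.
move=> Pc; rewrite e_cp_mul; last exact: cp_elt_mon.
rewrite (fsbig_single _ 0) => [|m /negbTE m0].
  by rewrite /cp_mon eqxx subr0.
by rewrite /cp_mon m0 e0 mul0r.
Qed.

Definition cp_fixsupp : set (int -> B) :=
  [set x | cp_elt x /\ forall n mu, e (x n) mu != 0 -> sz n mu = mu].

Lemma commutant_fixsupp x : cp_elt x ->
  (forall c, P c -> cp_mul x (cp_mon 0 c) = cp_mul (cp_mon 0 c) x) -> cp_fixsupp x.
Proof.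
move=> xelt xcomm; split=> // n mu xn; rewrite -[n]opprK.
apply: (sigmaz_fixN Hs); apply: Delta_ext => a; have [c Pc ca] := gelfand_e a.
have := congr1 (fun y => e (y n) mu) (xcomm c Pc).
rewrite /= e_cp_mul_mon0 // e_cp_mon0_mul // ca /gelfand [RHS]mulrC.
by move=> /(mulfI xn).
Qed.

Lemma cp_base_fixsupp : cp_base `<=` cp_fixsupp.
Proof.
move=> x [xelt x0]; split=> // n mu; have [-> //|n0] := eqVneq n 0.
by rewrite x0 // e0 eqxx.
Qed.

Lemma e_cp_mul_fixsupp x y k mu : cp_fixsupp x ->
  e (cp_mul x y k) mu = \sum_(n \in [set: int]) e (x n) mu * e (y (k - n)) mu.
Proof.
move=> [xelt xfix]; rewrite e_cp_mul //; apply: eq_fsbigr => n _.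
have [->|xn] := eqVneq (e (x n) mu) 0; first by rewrite !mul0r.
by rewrite (sigmaz_fixN Hs) // xfix.
Qed.

Lemma cp_fixsupp_subalgebra : cp_subalgebra mulB scB Psi P cp_fixsupp.
Proof.
split=> [x [] // | | x y [xelt xfix] [yelt yfix] | k x [xelt xfix]
        | x y [xelt xfix] [yelt yfix]].
- by split=> [|n mu]; [exact: cp_elt0 | rewrite e0 eqxx].
- split=> [|n mu]; first exact: cp_eltD.
  rewrite /cp_add eD; have [x0|/xfix//] := eqVneq (e (x n) mu) 0.
  by rewrite x0 add0r => /yfix.
- split=> [|n mu]; first exact: cp_eltZ.
  by rewrite /cp_scale eZ mulf_eq0 negb_or => /andP[_ /xfix].
- split=> [|k mu]; first exact: cp_eltM.
  rewrite e_cp_mul // => /fsbig_neq0 [n]; rewrite mulf_eq0 negb_or => /andP[xn ykn].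
  have xnfix := xfix _ _ xn.
  move: ykn; rewrite (sigmaz_fixN Hs _ _ xnfix) => /yfix ykn_fix.
  by have := sigmaz_fixD Hs _ _ _ xnfix ykn_fix; rewrite addrC subrK.
Qed.

Lemma cp_fixsupp_abelian : cp_abelian mulB Psi cp_fixsupp.
Proof.
move=> x y xfix yfix; apply: funext => k; apply: e_inj => mu.
rewrite !e_cp_mul_fixsupp // (reindex_fsbigT (fun n => k - n)) /=; last first.
  by exists (fun n => k - n) => n /=; rewrite opprB addrC subrK.
by apply: eq_fsbigr => n _; rewrite mulrC opprB addrC subrK.
Qed.

Lemma cp_base_subalgebra : cp_subalgebra mulB scB Psi P cp_base.
Proof.
split=> [x [] // | | x y [xelt x0] [yelt y0] | k x [xelt x0] | x y [xelt x0] [yelt y0]].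
- by split=> [|n]; [exact: cp_elt0 | ].
- by split=> [|n n0]; [exact: cp_eltD | rewrite /cp_add x0 // y0 // addr0].
- by split=> [|n n0]; [exact: cp_eltZ | rewrite /cp_scale x0 // scaleB0].
- split=> [|k k0]; first exact: cp_eltM.
  apply: e_inj => mu; rewrite e0 e_cp_mul //; apply: fsbig1 => n _.
  have [->|n0] := eqVneq n 0; last by rewrite x0 // e0 mul0r.
  by rewrite subr0 y0 // e0 mulr0.
Qed.

Lemma cp_base_abelian : cp_abelian mulB Psi cp_base.
Proof. by move=> x y /cp_base_fixsupp xfix /cp_base_fixsupp yfix; exact: cp_fixsupp_abelian. Qed.

Theorem dense_maximal_abelian :
  gdense (nonperiodic mul s s') -> maximal_abelian mulB scB Psi P.
Proof.
move=> dense; split=> [|| S [Selt _ _ _ _] Sab baseS];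
  [exact: cp_base_subalgebra | exact: cp_base_abelian |].
apply/seteqP; split=> [x Sx|]; last exact: baseS.
have xelt := Selt x Sx.
have [_ xfix] : cp_fixsupp x.
  by apply: commutant_fixsupp => // c Pc; apply: Sab => //; apply/baseS/cp_base_mon0.
split=> // n n0; apply: e_inj => mu; rewrite e0; apply/eqP; apply: contraT => xn.
have [a xa] := e_gelfand _ (xelt.2 n).
have mua : sval mu a != 0 by rewrite -[sval mu a]/(gelfand mul a mu) -xa.
have [nu [/= nua nu_nonper]] := dense _ (gopen_char_neq0 a) (ex_intro _ mu mua).
by case: (nu_nonper n n0); apply: xfix; rewrite xa.
Qed.

Theorem maximal_abelian_dense :
  maximal_abelian mulB scB Psi P -> gdense (nonperiodic mul s s').
Proof.
move=> [_ _ maximal]; apply: (nonperiodic_dense HA Hs) => n n0 V openV [mu0 Vmu0].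
apply: contrapT => none_moved.
have Vfixed mu : V mu -> sz n mu = mu.
  by move=> Vmu; apply: contrapT => moved; apply: none_moved; exists mu.
have closedV : gclosed (~` V) by rewrite /gclosed setCK.
have [a [a0 mu0a]] := Hcr (~` V) mu0 closedV (fun nV => nV Vmu0).
have [b Pb eb] := gelfand_e a.
have bfix : cp_fixsupp (cp_mon n b).
  split=> [|m mu]; first exact: cp_elt_mon.
  rewrite /cp_mon; have [->|_] := eqVneq m n; last by rewrite e0 eqxx.
  rewrite eb => mua; apply: Vfixed; apply: contrapT => nV.
  by move: mua; rewrite /gelfand a0 ?eqxx.
have : cp_base (cp_mon n b).
  by rewrite -(maximal _ cp_fixsupp_subalgebra cp_fixsupp_abelian cp_base_fixsupp).
case=> _ /(_ n); rewrite /cp_mon eqxx => b0.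
by apply: mu0a; rewrite -[sval mu0 a]/(gelfand mul a mu0) -eb b0 ?e0 // -lt0n.
Qed.

Theorem dense_iff_maximal_abelian :
  gdense (nonperiodic mul s s') <-> maximal_abelian mulB scB Psi P.
Proof. by split; [exact: dense_maximal_abelian | exact: maximal_abelian_dense]. Qed.

End CrossedProduct.

Section Instances.
Context {R : realType} {A : lmodType R[i]} {mul : A -> A -> A} {nrm : A -> R}.
Context {s s' : A -> A}.
Hypothesis HA : comm_banach_algebra mul nrm.
Hypothesis Hcr : completely_regular mul.
Hypothesis Hs : algebra_automorphism mul s s'.
Local Notation D := (Delta mul).

Lemma gelfand_dense_iff_maximal_abelian :
  gdense (nonperiodic mul s s') <->
  maximal_abelian (fun f g : D -> R[i] => fun mu => f mu * g mu)
    (fun (c : R[i]) (f : D -> R[i]) => fun mu => c * f mu)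
    (hat_sigmaz mul s s') (range (gelfand mul)).
Proof.
apply: (dense_iff_maximal_abelian HA Hcr Hs _ _ _ _ _ (fun f mu => f mu)) => //.
- by move=> f g /funext.
- by exists 0 => //; apply/funext => mu; rewrite /gelfand char0.
- by move=> _ _ [a _ <-] [b _ <-]; exists (a + b) => //; apply/funext => mu; exact: charD.
- by move=> k _ [a _ <-]; exists (k *: a) => //; apply/funext => mu; exact: charZ.
- by move=> _ _ [a _ <-] [b _ <-]; exists (mul a b) => //; apply/funext => mu; exact: charM.
- move=> n _ [a _ <-]; exists (autz s s' n a) => //; apply/funext => mu.
  by rewrite /hat_sigmaz /gelfand /= (sigmazE Hs) opprK.
- by move=> _ [a _ <-]; exists a.
- by move=> a; exists (gelfand mul a) => //; exists a.
Qed.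

Lemma algebra_maximal_abelian_iff_dense :
  semisimple mul ->
  maximal_abelian mul (fun (c : R[i]) (a : A) => c *: a) (autz s s') setT <->
  gdense (nonperiodic mul s s').
Proof.
move=> Hss; symmetry.
apply: (dense_iff_maximal_abelian HA Hcr Hs _ _ _ _ _ (fun a (mu : D) => sval mu a)) => //.
- by move=> a b mu; exact: charD.
- by move=> a b mu; exact: charM.
- by move=> k a mu; exact: charZ.
- by move=> n a mu; rewrite (sigmazE Hs) opprK.
- by move=> a b ab; apply: Hss; apply/funext.
- by move=> a _; exists a.
- by move=> a; exists a.
Qed.

End Instances.

Theorem theorem4p8 (R : realType) (A : lmodType R[i])
  (mul : A -> A -> A) (nrm : A -> R)
  (HA : comm_banach_algebra mul nrm)
  (Hss : semisimple mul) (Hcr : completely_regular mul)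
  (s s' : A -> A) (Hs : algebra_automorphism mul s s') :
  (gdense (nonperiodic mul s s') <->
   maximal_abelian
     (fun f g : Delta mul -> R[i] => fun mu => f mu * g mu)
     (fun (c : R[i]) (f : Delta mul -> R[i]) => fun mu => c * f mu)
     (hat_sigmaz mul s s')
     (range (gelfand mul)))
  /\
  (maximal_abelian mul (fun (c : R[i]) (a : A) => c *: a) (autz s s') setT <->
   gdense (nonperiodic mul s s')).
Proof.
split; first exact: gelfand_dense_iff_maximal_abelian HA Hcr Hs.
exact: algebra_maximal_abelian_iff_dense HA Hcr Hs Hss.
Qed.
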